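(* Let $a<b<c$ be elements of $\mathcal{C}_n$ and let $\triangle=\triangle^{(n)}\{a,b,c\}$. Let $L_{par}=\{\alpha\in\triangle:\ \alpha(a)=a,\ \alpha(b)=\alpha(c)=b\}$ and $R_{par}=\{\alpha\in\triangle:\ \alpha(a)=\alpha(b)=b,\ \alpha(c)=c\}$. Then $L_{par}$ and $R_{par}$ are subsemirings of $\triangle$.
   Context: $\mathcal{C}_n=\{0,1,\dots,n-1\}$ with its usual order; $\widehat{\mathcal{E}}_{\mathcal{C}_n}$ is the set of all order-preserving maps $\mathcal{C}_n\to\mathcal{C}_n$ (not required to fix $0$), a semiring with $(\alpha+\beta)(x)=\max(\alpha(x),\beta(x))$ and $(\alpha\cdot\beta)(x)=\beta(\alpha(x))$. The triangle $\triangle^{(n)}\{a,b,c\}$ is the set of all $\alpha\in\widehat{\mathcal{E}}_{\mathcal{C}_n}$ with image in $\{a,b,c\}$. In the paper, $L_{par}$ is the set of ''left elements'' of the layers $\{\alpha\in\triangle: |\alpha^{-1}(a)|=k\}$, $a+1\le k\le b$, and $R_{par}$ the set of ''right elements'' of the layers $\{\alpha\in\triangle: |\alpha^{-1}(c)|=k\}$, $n-c\le k\le n-b-1$; these coincide with the sets described in the claim. A subsemiring is a nonempty subset closed under $+$ and $\cdot$. *)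

(* C_n = 'I_n with its usual order. *)
From mathcomp Require Import all_boot all_order.
Set Implicit Arguments. Unset Strict Implicit. Unset Printing Implicit Defensive.

(* An element of \hat E_{C_n}: an order-preserving map C_n -> C_n (0 need not be fixed). *)
Definition order_preserving (n : nat) (f : 'I_n -> 'I_n) : Prop :=
  forall x y : 'I_n, x <= y -> f x <= f y.

Definition splus (n : nat) (f g : 'I_n -> 'I_n) : 'I_n -> 'I_n :=
  fun x => if f x <= g x then g x else f x.

Definition smul (n : nat) (f g : 'I_n -> 'I_n) : 'I_n -> 'I_n :=
  fun x => g (f x).

Definition triangle (n : nat) (a b c : 'I_n) (f : 'I_n -> 'I_n) : Prop :=
  order_preserving f /\ forall x, f x = a \/ f x = b \/ f x = c.

Definition subsemiring_of (n : nat) (T S : ('I_n -> 'I_n) -> Prop) : Prop :=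
  (forall f, S f -> T f) /\
  (exists f, S f) /\
  (forall f g, S f -> S g -> S (splus f g)) /\
  (forall f g, S f -> S g -> S (smul f g)).

Definition L_par (n : nat) (a b c : 'I_n) (f : 'I_n -> 'I_n) : Prop :=
  triangle a b c f /\ f a = a /\ f b = b /\ f c = b.

Definition R_par (n : nat) (a b c : 'I_n) (f : 'I_n -> 'I_n) : Prop :=
  triangle a b c f /\ f a = b /\ f b = b /\ f c = c.

From mathcomp Require Import all_boot all_order.

(* Both sets are cut out of the triangle by prescribing the values at a, b, c.
   Prescribed values common to f and g are kept by the pointwise maximum, and the
   prescriptions send {a, b, c} into points where they agree with themselves
   (for L_par: a |-> a, b |-> b, c |-> b), so they are kept by composition.
   Nonemptiness is witnessed by a two-valued step map. *)

Section Triangle.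

Variables (n : nat) (a b c : 'I_n).

Lemma splus_val (f g : 'I_n -> 'I_n) x : splus f g x = maxn (f x) (g x) :> nat.
Proof. by rewrite /splus; case: leqP. Qed.

Lemma order_preserving_splus (f g : 'I_n -> 'I_n) :
  order_preserving f -> order_preserving g -> order_preserving (splus f g).
Proof.
move=> hf hg x y hxy; rewrite !splus_val geq_max !leq_max.
by rewrite hf ?hg ?orbT.
Qed.

Lemma order_preserving_smul (f g : 'I_n -> 'I_n) :
  order_preserving f -> order_preserving g -> order_preserving (smul f g).
Proof. by move=> hf hg x y hxy; apply/hg/hf. Qed.

Definition step_map (t : nat) (u v : 'I_n) (x : 'I_n) : 'I_n :=
  if x < t then u else v.

Lemma order_preserving_step t (u v : 'I_n) :
  u <= v -> order_preserving (step_map t u v).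
Proof.
move=> huv x y hxy; rewrite /step_map.
case: ifP => hx; case: ifP => hy //.
by rewrite (leq_ltn_trans hxy hy) in hx.
Qed.

Lemma triangle_splus (f g : 'I_n -> 'I_n) :
  triangle a b c f -> triangle a b c g -> triangle a b c (splus f g).
Proof.
move=> [opf imf] [opg img]; split; first exact: order_preserving_splus.
by move=> x; rewrite /splus; case: ifP.
Qed.

Lemma triangle_smul (f g : 'I_n -> 'I_n) :
  triangle a b c f -> triangle a b c g -> triangle a b c (smul f g).
Proof.
by move=> [opf imf] [opg img]; split; [exact: order_preserving_smul | move=> x; apply: img].
Qed.

Lemma triangle_step t (u v : 'I_n) :
  u <= v -> u \in [:: a; b; c] -> v \in [:: a; b; c] -> triangle a b c (step_map t u v).
Proof.
move=> huv hu hv; split; first exact: order_preserving_step.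
move=> x; rewrite /step_map; case: ifP => _;
  [move: hu | move: hv]; by rewrite !inE => /or3P[] /eqP ->; auto.
Qed.

Lemma splus_common (f g : 'I_n -> 'I_n) x v : f x = v -> g x = v -> splus f g x = v.
Proof. by rewrite /splus => -> ->; rewrite leqnn. Qed.

Lemma L_par_subsemiring : a < b -> b < c -> subsemiring_of (triangle a b c) (L_par a b c).
Proof.
move=> hab hbc; have hac := ltn_trans hab hbc.
split; first by move=> f [].
split; [| split].
- exists (step_map a.+1 a b); split.
    by apply: triangle_step; rewrite ?(ltnW hab) ?inE ?eqxx ?orbT.
  by rewrite /step_map ltnSn ltnS leqNgt hab ltnS leqNgt hac.
- move=> f g [tf [fa [fb fc]]] [tg [ga [gb gc]]]; split; first exact: triangle_splus.
  by split; [|split]; apply: splus_common.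
- move=> f g [tf [fa [fb fc]]] [tg [ga [gb gc]]]; split; first exact: triangle_smul.
  by rewrite /smul fa fb fc ga gb.
Qed.

Lemma R_par_subsemiring : a < b -> b < c -> subsemiring_of (triangle a b c) (R_par a b c).
Proof.
move=> hab hbc; have hac := ltn_trans hab hbc.
split; first by move=> f [].
split; [| split].
- exists (step_map c b c); split.
    by apply: triangle_step; rewrite ?(ltnW hbc) ?inE ?eqxx ?orbT.
  by rewrite /step_map hac hbc ltnn.
- move=> f g [tf [fa [fb fc]]] [tg [ga [gb gc]]]; split; first exact: triangle_splus.
  by split; [|split]; apply: splus_common.
- move=> f g [tf [fa [fb fc]]] [tg [ga [gb gc]]]; split; first exact: triangle_smul.
  by rewrite /smul fa fb fc gb gc.
Qed.

End Triangle.

Theorem proposition39 (n : nat) (a b c : 'I_n) (hab : a < b) (hbc : b < c) :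
  subsemiring_of (triangle a b c) (L_par a b c) /\
  subsemiring_of (triangle a b c) (R_par a b c).
Proof. by split; [exact: L_par_subsemiring | exact: R_par_subsemiring]. Qed.
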